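(* Let $G$ be a stochastic game with generalized-reachability objective $\mathcal T$ of dimension $n$. If $s\in S_\Box$ is a Maximizer state, then $\mathsf{exit}[\mathfrak A](\{s\})=\mathfrak A(s)$.
   Context: Stochastic game $G=(S,S_\Box,S_\circ,s_0,A,\mathrm{Av},\delta)$: finite state set $S$ partitioned into Maximizer states $S_\Box$ and Minimizer states $S_\circ$, initial state $s_0$, finite action set $A$, nonempty $\mathrm{Av}(s)$, transition distributions $\delta(s,a)$. Strategies history-dependent randomized; $\mathbb P^{\sigma,\tau}_s$ measure on infinite paths from $s$. Objective $\mathcal T=(T_1,\dots,T_n)$, $T_i\subseteq S$; $\mathfrak A(s)$ = set of $\vec v\in\mathbb R^n_{\ge0}$ such that some Maximizer strategy $\sigma$ gives $\mathbb P^{\sigma,\tau}_s(\Diamond T_i)\ge\vec v_i$ for all Minimizer strategies $\tau$ and all $i$. Geometry: $\mathit{dwc}(X)=\{y\in\mathbb R^n_{\ge0}\mid\exists x\in X:y\le x\}$; $\mathbf 1=\mathit{dwc}(\{\vec1\})$; $c\cdot X=\{cx\mid x\in X\}$; $X+Y$ Minkowski sum; $\mathrm{conv}$ convex hull. For $f:S\to2^{\mathbb R^n}$ and $a\in\mathrm{Av}(s)$: $f(s,a):=\big(\mathit{dwc}(\{\mathbb 1_{\mathcal T}(s)\})+\sum_{s'}\delta(s,a)(s')\cdot f(s')\big)\cap\mathbf 1$ where $\mathbb 1_{\mathcal T}(s)_i=1$ iff $s\in T_i$. $(s,a)$ exits $T\subseteq S$ if some successor $s'$ with $\delta(s,a)(s')>0$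 lies outside $T$; $\mathsf{Exits}(T)$ is the set of such pairs with $s\in T$, $a\in\mathrm{Av}(s)$. Best exit: $\mathsf{exit}[f](T):=\big(\mathit{dwc}(\{\sum_{s\in T}\mathbb 1_{\mathcal T}(s)\})+\mathrm{conv}(\bigcup_{(s,a)\in\mathsf{Exits}(T),\,s\in S_\Box}f(s,a))\big)\cap\mathbf 1$, with $\bigcup_\emptyset=\{\vec 0\}$. *)

From mathcomp Require Import all_boot all_order all_algebra.
From mathcomp Require Import boolp classical_sets reals.

Set Implicit Arguments.
Unset Strict Implicit.
Unset Printing Implicit Defensive.

Import Order.TTheory GRing.Theory Num.Theory.
Local Open Scope ring_scope.
Local Open Scope classical_set_scope.

(* A game is given by: R (reals), S (states), A (actions), Max (Maximizer
   states; Minimizer states are the complement), Av (available actions),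
   delta (transition distributions: delta s a s' = delta(s,a)(s')). *)

(* Histories: the sequence of past (state, action) pairs; the current state
   is passed separately.  A history from s is [::] with current state s. *)
Definition hist (S A : finType) := seq (S * A).

Definition strategy (R : realType) (S A : finType) := hist S A -> S -> A -> R.

Definition is_strategy (R : realType) (S A : finType) (Av : S -> {set A})
  (P : S -> bool) (st : strategy R S A) : Prop :=
  forall (h : hist S A) (c : S), P c ->
    (forall a, 0 <= st h c a) /\ (forall a, a \notin Av c -> st h c a = 0) /\
    \sum_a st h c a = 1.

Definition is_max_strategy R S A (Max : {set S}) (Av : S -> {set A}) st :=
  @is_strategy R S A Av (fun c => c \in Max) st.
Definition is_min_strategy R S A (Max : {set S}) (Av : S -> {set A}) st :=
  @is_strategy R S A Av (fun c => c \notin Max) st.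

Fixpoint reach_within (R : realType) (S A : finType) (Max : {set S})
  (delta : S -> A -> S -> R) (sg tau : strategy R S A) (T : {set S})
  (k : nat) (h : hist S A) (c : S) {struct k} : R :=
  match k with
  | 0 => if c \in T then 1 else 0
  | k'.+1 =>
      if c \in T then 1 else
      \sum_a ((if c \in Max then sg h c a else tau h c a) *
              \sum_s' (delta c a s' *
                       reach_within Max delta sg tau T k' (rcons h (c, a)) s'))
  end.

(* P^{sg,tau}_s(<> T): the probability of the event "eventually T" of the
   path measure, computed as the (monotone) limit = supremum of the
   probabilities of reaching T within k steps. *)
Definition reach_prob (R : realType) (S A : finType) (Max : {set S})
  (delta : S -> A -> S -> R) (sg tau : strategy R S A) (T : {set S}) (s : S) : R :=
  sup (range (fun k : nat => reach_within Max delta sg tau T k [::] s)).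

Definition vec (R : realType) (n : nat) := 'I_n -> R.

Definition achievable (R : realType) (S A : finType) (Max : {set S})
  (Av : S -> {set A}) (delta : S -> A -> S -> R) (n : nat)
  (Tobj : 'I_n -> {set S}) (s : S) : set (vec R n) :=
  [set v | (forall i, 0 <= v i) /\
     exists sg : strategy R S A, is_max_strategy Max Av sg /\
       forall tau : strategy R S A, is_min_strategy Max Av tau ->
         forall i, v i <= reach_prob Max delta sg tau (Tobj i) s].

Definition dwc (R : realType) (n : nat) (X : set (vec R n)) : set (vec R n) :=
  [set y | (forall i, 0 <= y i) /\ exists2 x, X x & forall i, y i <= x i].

Definition unit_box (R : realType) (n : nat) : set (vec R n) :=
  dwc [set (fun _ : 'I_n => (1 : R))].

Definition msum (R : realType) (n : nat) (X Y : set (vec R n)) : set (vec R n) :=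
  [set z | exists x y, X x /\ Y y /\ z = (fun i => x i + y i)].

Definition conv (R : realType) (n : nat) (X : set (vec R n)) : set (vec R n) :=
  [set x | exists (m : nat) (w : 'I_m -> R) (p : 'I_m -> vec R n),
     (forall j, 0 <= w j) /\ \sum_j w j = 1 /\ (forall j, X (p j)) /\
     x = (fun i => \sum_j w j * p j i)].

Definition ind_obj (R : realType) (S : finType) (n : nat)
  (Tobj : 'I_n -> {set S}) (s : S) : vec R n :=
  fun i => if s \in Tobj i then 1 else 0.

Definition succ_sum (R : realType) (S A : finType) (delta : S -> A -> S -> R)
  (n : nat) (f : S -> set (vec R n)) (s : S) (a : A) : set (vec R n) :=
  [set z | exists y : S -> vec R n, (forall s', f s' (y s')) /\
     z = (fun i => \sum_s' delta s a s' * y s' i)].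

Definition f_act (R : realType) (S A : finType) (delta : S -> A -> S -> R)
  (n : nat) (Tobj : 'I_n -> {set S}) (f : S -> set (vec R n)) (s : S) (a : A)
  : set (vec R n) :=
  msum (dwc [set ind_obj R Tobj s]) (succ_sum delta f s a) `&` @unit_box R n.

Definition exits (R : realType) (S A : finType) (Av : S -> {set A})
  (delta : S -> A -> S -> R) (C : {set S}) (s : S) (a : A) : bool :=
  [&& s \in C, a \in Av s & [exists s', (0 < delta s a s') && (s' \notin C)]].

Definition exit_union (R : realType) (S A : finType) (Max : {set S})
  (Av : S -> {set A}) (delta : S -> A -> S -> R) (n : nat)
  (Tobj : 'I_n -> {set S}) (f : S -> set (vec R n)) (C : {set S}) : set (vec R n) :=
  if [exists s, exists a, exits Av delta C s a && (s \in Max)]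
  then [set x | exists s a, exits Av delta C s a /\ s \in Max /\
                  f_act delta Tobj f s a x]
  else [set (fun _ : 'I_n => (0 : R))].

Definition best_exit (R : realType) (S A : finType) (Max : {set S})
  (Av : S -> {set A}) (delta : S -> A -> S -> R) (n : nat)
  (Tobj : 'I_n -> {set S}) (f : S -> set (vec R n)) (C : {set S}) : set (vec R n) :=
  msum (dwc [set (fun i => \sum_(s in C) ind_obj R Tobj s i)])
       (conv (exit_union Max Av delta Tobj f C))
  `&` @unit_box R n.

(* Actions that keep the play at the Maximizer state [s] with probability one
   only postpone a decision; what matters is the distribution of the first
   action leaving [s] and what is achieved afterwards.

   If [v] lies in exit[A]({s}), it is dominated by a convex combination of
   points d_j + sum_s' delta(s,a_j,s') y_j(s') with exit actions a_j and
   achievable y_j(s'). The Maximizer draws j, plays a_j and then a strategy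
   achieving y_j(s'); this lottery over finitely many strategies is again a
   behaviour strategy, by Kuhn's construction.

   Conversely, let sigma achieve [v] at [s]. Grouping its plays by the loop
   history before the first exit and by the exit action b, and averaging the
   continuations of sigma over these countably many histories (Kuhn's
   construction once more), gives one strategy sigma_b per exit, used with
   total probability W_b, where sum_b W_b <= 1. The Minimizer may answer every
   exit with a nearly optimal counter-strategy, so for each target T_i not
   containing [s], v_i <= sum_b W_b sum_s' delta(s,b,s') Y_b,i(s'), where
   Y_b,i(s') is the value of sigma_b for T_i from s'. Rescaling coordinatewise
   turns these bounds into the required convex combination of exit points. *)

From mathcomp Require Import all_boot all_order all_algebra.
From mathcomp Require Import boolp classical_sets reals.
From mathcomp Require Import lra ring.

Import Order.TTheory GRing.Theory Num.Theory.
Local Open Scope ring_scope.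
Local Open Scope classical_set_scope.

Set Implicit Arguments.
Unset Strict Implicit.
Unset Printing Implicit Defensive.

Section MonotoneSup.
Variable R : realType.
Implicit Types (u v : nat -> R) (c : R).

Definition nondecreasing_seq u := forall k, u k <= u k.+1.

Lemma nondecreasing_seq_le u : nondecreasing_seq u ->
  {homo u : k k' / (k <= k')%N >-> k <= k'}.
Proof. exact: homo_leq (@lexx _ _) (fun y x z => @le_trans _ _ y x z). Qed.

Lemma sup_range_ub u k : has_ubound (range u) -> u k <= sup (range u).
Proof. by move=> ub; apply: ub_le_sup; last by exists k. Qed.

Lemma sup_range_le u M : (forall k, u k <= M) -> sup (range u) <= M.
Proof. by move=> uM; apply: ge_sup; [exists (u 0%N), 0%N | move=> _ [k _ <-]]. Qed.

Lemma sup_range_gt u x : x < sup (range u) -> exists k, x < u k.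
Proof. by move=> /sup_gt [|_ [k _ <-]]; [exists (u 0%N), 0%N | exists k]. Qed.

Lemma le_sup_range u v : has_ubound (range v) -> (forall k, u k <= v k) ->
  sup (range u) <= sup (range v).
Proof. by move=> ub uv; apply: sup_range_le => k; apply: le_trans (uv k) (sup_range_ub k ub). Qed.

Lemma has_ubound_rangeD u v : has_ubound (range u) -> has_ubound (range v) ->
  has_ubound (range (fun k => u k + v k)).
Proof.
move=> [M uM] [N vN]; exists (M + N) => _ [k _ <-].
by apply: lerD; [apply: uM | apply: vN]; exists k.
Qed.

Lemma has_ubound_rangeZ u c : 0 <= c -> has_ubound (range u) ->
  has_ubound (range (fun k => c * u k)).
Proof. by move=> c0 [M uM]; exists (c * M) => _ [k _ <-]; rewrite ler_wpM2l // uM //; exists k. Qed.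

Lemma sup_range_cst c : sup (range (fun _ : nat => c)) = c.
Proof.
have -> : range (fun _ : nat => c) = [set c].
  by apply/seteqP; split=> [_ [k _ <-]|_ ->] //; exists 0%N.
exact: sup1.
Qed.

Lemma sup_rangeD u v : nondecreasing_seq u -> nondecreasing_seq v ->
  has_ubound (range u) -> has_ubound (range v) ->
  sup (range (fun k => u k + v k)) = sup (range u) + sup (range v).
Proof.
move=> nu nv bu bv; apply/eqP; rewrite eq_le; apply/andP; split.
  by apply: sup_range_le => k; apply: lerD; apply: sup_range_ub.
apply/ler_addgt0Pr => e e0; have e2 : 0 < e / 2 by rewrite divr_gt0.
have [k1 lt1] := @sup_range_gt u (sup (range u) - e / 2) ltac:(by rewrite ltrBlDr ltrDl).
have [k2 lt2] := @sup_range_gt v (sup (range v) - e / 2) ltac:(by rewrite ltrBlDr ltrDl).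
have := sup_range_ub (maxn k1 k2) (has_ubound_rangeD bu bv).
have := nondecreasing_seq_le nu (leq_maxl k1 k2).
have := nondecreasing_seq_le nv (leq_maxr k1 k2).
by lra.
Qed.

Lemma sup_rangeZ u c : 0 <= c -> has_ubound (range u) ->
  sup (range (fun k => c * u k)) = c * sup (range u).
Proof.
move=> c0 bu; have [->|cn0] := eqVneq c 0.
  by under eq_fun do rewrite mul0r; rewrite mul0r sup_range_cst.
have cp : 0 < c by rewrite lt_def cn0.
apply/eqP; rewrite eq_le; apply/andP; split.
  by apply: sup_range_le => k; rewrite ler_wpM2l // sup_range_ub.
rewrite -ler_pdivlMl //; apply: sup_range_le => k.
by rewrite ler_pdivlMl //; apply/sup_range_ub/has_ubound_rangeZ.
Qed.

Lemma sup_range_sum (I : Type) (r : seq I) (P : pred I) (c : I -> R)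
    (u : I -> nat -> R) :
  (forall j, P j -> 0 <= c j) -> (forall j, P j -> nondecreasing_seq (u j)) ->
  (forall j, P j -> has_ubound (range (u j))) ->
  sup (range (fun k => \sum_(j <- r | P j) c j * u j k)) =
  \sum_(j <- r | P j) c j * sup (range (u j)).
Proof.
move=> c0 nu bu; pose w k := \sum_(j <- r | P j) c j * u j k.
suff [] : [/\ nondecreasing_seq w, has_ubound (range w) &
              sup (range w) = \sum_(j <- r | P j) c j * sup (range (u j))] by [].
rewrite {}/w; elim: r => [|j r [IHn IHb IHs]].
  under eq_fun do rewrite big_nil; rewrite big_nil.
  by split=> [k||] //; [exists 0 => _ [k _ <-] | exact: sup_range_cst].
under eq_fun do rewrite big_cons; rewrite big_cons; case: ifP => Pj //.
have cj0 := c0 j Pj; have nuj := nu j Pj; have buj := bu j Pj.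
have ncu : nondecreasing_seq (fun k => c j * u j k) by move=> k; rewrite ler_wpM2l.
have bcu := has_ubound_rangeZ cj0 buj.
split=> [k||]; [exact: lerD | exact: has_ubound_rangeD |].
by rewrite sup_rangeD // IHs sup_rangeZ.
Qed.

End MonotoneSup.

Lemma sum_pick (R : pzSemiRingType) (I : finType) (a : I) (F : I -> R) :
  \sum_b (b == a)%:R * F b = F a.
Proof. by rewrite (bigD1 a) //= eqxx mul1r big1 ?addr0 // => b /negbTE ->; rewrite mul0r. Qed.

Lemma ratio_le1 (F : realFieldType) (x y : F) : 0 <= x <= y ->
  exists t, 0 <= t <= 1 /\ t * y = x.
Proof.
case/andP=> x0 xy; have [y0|y0] := eqVneq y 0.
  exists 0; split; first by rewrite lexx ler01.
  by apply/eqP; rewrite mul0r eq_le x0 -y0 xy.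
have yp : 0 < y by rewrite lt_def y0 (le_trans x0 xy).
by exists (x / y); rewrite divfK // divr_ge0 ?(ltW yp) //= ler_pdivrMr // mul1r.
Qed.

Section ConvexHull.
Variables (R : realType) (n : nat).

Lemma sum_ord_unlift m (F : option 'I_m -> R) :
  \sum_(k < m.+1) F (unlift ord0 k) = F None + \sum_(k < m) F (Some k).
Proof. by rewrite big_ord_recl unlift_none; under eq_bigr do rewrite liftK. Qed.

Lemma conv_subprob_comb (X : set (vec R n)) (I : finType) (P : pred I)
    (w : I -> R) (p : I -> vec R n) :
  X (fun _ => 0) -> (forall j, P j -> X (p j)) -> (forall j, P j -> 0 <= w j) ->
  \sum_(j | P j) w j <= 1 -> conv X (fun i => \sum_(j | P j) w j * p j i).
Proof.
move=> X0 Xp w0 w1.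
pose W j := if P j then w j else 0.
pose q j := if P j then p j else (fun _ : 'I_n => 0).
pose W' (k : 'I_#|I|.+1) := oapp (W \o enum_val) (1 - \sum_(j | P j) w j) (unlift ord0 k).
pose q' (k : 'I_#|I|.+1) := oapp (q \o enum_val) (fun _ : 'I_n => 0) (unlift ord0 k).
have sum_enum (F : I -> R) : \sum_(k < #|I|) F (@enum_val I I k) = \sum_j F j.
  by rewrite -(big_enum_val (A := I)).
exists #|I|.+1, W', q'; split; [|split; [|split]].
- move=> k; rewrite /W'; case: (unlift ord0 k) => [k'|] /=; last by rewrite subr_ge0.
  by rewrite /W; case: ifP => // /w0.
- rewrite (sum_ord_unlift (oapp (W \o enum_val) _)) /= sum_enum.
  by rewrite big_mkcond subrK.
- move=> k; rewrite /q'; case: (unlift ord0 k) => [k'|] //=.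
  by rewrite /q; case: ifP => // /Xp.
- apply: funext => i; rewrite (sum_ord_unlift (fun o => oapp _ _ o * oapp _ _ o i)) /=.
  rewrite mulr0 add0r (sum_enum (fun j => W j * q j i)) big_mkcond /=.
  by apply: eq_bigr => j _; rewrite /W /q; case: ifP; rewrite ?mul0r.
Qed.

End ConvexHull.

Section Game.
Variables (R : realType) (S A : finType) (Max : {set S}) (Av : S -> {set A})
  (delta : S -> A -> S -> R).
Hypothesis delta_distr : forall s a, a \in Av s ->
  (forall s', 0 <= delta s a s') /\ \sum_s' delta s a s' = 1.

Local Notation strat := (strategy R S A).
Local Notation max_strategy := (is_max_strategy Max Av).
Local Notation min_strategy := (is_min_strategy Max Av).
Local Notation reach := (reach_within Max delta).
Local Notation prob := (reach_prob Max delta).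

Lemma delta_ge0 s a s' : a \in Av s -> 0 <= delta s a s'.
Proof. by case/delta_distr. Qed.

Definition distr_on (c : S) (w : A -> R) :=
  [/\ forall a, 0 <= w a, forall a, a \notin Av c -> w a = 0 & \sum_a w a = 1].

Lemma strategy_distr_on (P : pred S) (st : strat) h c :
  is_strategy Av P st -> P c -> distr_on c (st h c).
Proof. by move=> hst /(hst h) [? []]. Qed.

Lemma max_strategy_distr sg h c : max_strategy sg -> c \in Max -> distr_on c (sg h c).
Proof. exact: strategy_distr_on. Qed.

Lemma min_strategy_distr tau h c : min_strategy tau -> c \notin Max -> distr_on c (tau h c).
Proof. exact: strategy_distr_on. Qed.

Lemma distr_on_le1 c w a : distr_on c w -> w a <= 1.
Proof. by case=> w0 _ <-; rewrite (bigD1 a) //= lerDl sumr_ge0. Qed.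

Lemma sum_Av c (f : A -> R) : (forall a, a \notin Av c -> f a = 0) ->
  \sum_a f a = \sum_(a in Av c) f a.
Proof. by move=> f0; rewrite [RHS]big_mkcond; apply: eq_bigr => a _; case: ifPn => // /f0. Qed.

Definition turn_weight (sg tau : strat) h c a :=
  if c \in Max then sg h c a else tau h c a.

Lemma turn_weight_distr sg tau h c : max_strategy sg -> min_strategy tau ->
  distr_on c (turn_weight sg tau h c).
Proof.
rewrite /turn_weight => hsg htau; have [cM|cM] := boolP (c \in Max).
  exact: max_strategy_distr.
exact: min_strategy_distr.
Qed.

Definition expect_next c (w : A -> R) (f : A -> S -> R) :=
  \sum_a w a * \sum_s' delta c a s' * f a s'.

Lemma ler_expect_next c w f g : distr_on c w ->
  (forall a s', a \in Av c -> f a s' <= g a s') ->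
  expect_next c w f <= expect_next c w g.
Proof.
case=> w0 wAv _ fg; apply: ler_sum => a _; have [aA|aA] := boolP (a \in Av c).
  by rewrite ler_wpM2l //; apply: ler_sum => s' _; rewrite ler_wpM2l ?delta_ge0 ?fg.
by rewrite wAv // !mul0r.
Qed.

Lemma expect_next_cst c w x : distr_on c w -> expect_next c w (fun _ _ => x) = x.
Proof.
case=> _ wAv w1; rewrite -[RHS]mul1r -w1 mulr_suml; apply: eq_bigr => a _.
have [aA|aA] := boolP (a \in Av c); last by rewrite wAv // !mul0r.
by rewrite -mulr_suml; case: (delta_distr aA) => _ ->; rewrite mul1r.
Qed.

Lemma reach_withinS sg tau T k h c : reach sg tau T k.+1 h c =
  if c \in T then 1 else
  expect_next c (turn_weight sg tau h c) (fun a => reach sg tau T k (rcons h (c, a))).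
Proof. by []. Qed.

Lemma reach_within_target sg tau (T : {set S}) k h c : c \in T -> reach sg tau T k h c = 1.
Proof. by case: k => /= [|k] ->. Qed.

Section Strategies.
Variables (sg tau : strat).
Hypotheses (hsg : max_strategy sg) (htau : min_strategy tau).

Lemma reach_within_ge0_le1 T k h c : 0 <= reach sg tau T k h c <= 1.
Proof.
elim: k h c => [|k IH] h c; first by rewrite /=; case: (c \in T); rewrite ?lexx ?ler01.
rewrite reach_withinS; case: ifP => _; first by rewrite lexx ler01.
have w := turn_weight_distr h c hsg htau.
apply/andP; split.
  rewrite -[X in X <= _](expect_next_cst 0 w); apply: ler_expect_next => // a s' _.
  by case/andP: (IH (rcons h (c, a)) s').
rewrite -[X in _ <= X](expect_next_cst 1 w); apply: ler_expect_next => // a s' _.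
by case/andP: (IH (rcons h (c, a)) s').
Qed.

Lemma reach_within_ge0 T k h c : 0 <= reach sg tau T k h c.
Proof. by case/andP: (reach_within_ge0_le1 T k h c). Qed.

Lemma reach_within_le1 T k h c : reach sg tau T k h c <= 1.
Proof. by case/andP: (reach_within_ge0_le1 T k h c). Qed.

Lemma reach_within_nondecr T h c : nondecreasing_seq (fun k => reach sg tau T k h c).
Proof.
move=> k; have w h' c' := turn_weight_distr h' c' hsg htau.
elim: k h c => [|k IH] h c; rewrite [X in _ <= X]reach_withinS.
  rewrite [X in X <= _]/=; case: ifP => // _.
  rewrite -[X in X <= _](expect_next_cst 0 (w h c)).
  by apply: ler_expect_next => // a s' _; exact: reach_within_ge0.
by rewrite reach_withinS; case: ifP => // _; apply: ler_expect_next => // a s' _; exact: IH.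
Qed.

Lemma reach_within_mono T k k' h c : (k <= k')%N ->
  reach sg tau T k h c <= reach sg tau T k' h c.
Proof. exact: nondecreasing_seq_le (reach_within_nondecr T h c) k k'. Qed.

Lemma reach_within_le_prob T k c : reach sg tau T k [::] c <= prob sg tau T c.
Proof. by apply: sup_range_ub; exists 1 => _ [j _ <-]; exact: reach_within_le1. Qed.

Lemma reach_prob_le1 T c : prob sg tau T c <= 1.
Proof. by apply: sup_range_le => k; exact: reach_within_le1. Qed.

Lemma reach_prob_ge0 T c : 0 <= prob sg tau T c.
Proof. exact: le_trans (reach_within_ge0 T 0 [::] c) (reach_within_le_prob T 0 c). Qed.

Lemma reach_prob_target (T : {set S}) c : c \in T -> prob sg tau T c = 1.
Proof.
move=> cT; apply/eqP; rewrite eq_le reach_prob_le1 /=.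
by have := reach_within_le_prob T 0 c; rewrite reach_within_target.
Qed.

End Strategies.

Definition shift_strategy (H : hist S A) (st : strat) : strat := fun g => st (H ++ g).

Lemma shift_strategyP (P : pred S) H st :
  is_strategy Av P st -> is_strategy Av P (shift_strategy H st).
Proof. by move=> hst g; apply: hst. Qed.

Lemma reach_within_shift sg tau T k H g c :
  reach sg tau T k (H ++ g) c = reach (shift_strategy H sg) (shift_strategy H tau) T k g c.
Proof.
elim: k g c => [|k IH] g c //=; case: ifP => // _.
by apply: eq_bigr => a _; congr (_ * _); apply: eq_bigr => s' _; rewrite rcons_cat IH.
Qed.

Definition first_state (g : hist S A) (c : S) := if g is p :: _ then p.1 else c.

Lemma first_state_rcons g c a s' : first_state (rcons g (c, a)) s' = first_state g c.
Proof. by case: g. Qed.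

Lemma reach_within_eq_from s0 sg1 sg2 tau1 tau2 T k g c :
  (forall g c, first_state g c = s0 -> sg1 g c = sg2 g c) ->
  (forall g c, first_state g c = s0 -> tau1 g c = tau2 g c) ->
  first_state g c = s0 -> reach sg1 tau1 T k g c = reach sg2 tau2 T k g c.
Proof.
move=> e1 e2; elim: k g c => [|k IH] g c //= g_s0; case: ifP => // _.
rewrite (e1 _ _ g_s0) (e2 _ _ g_s0); apply: eq_bigr => a _; congr (_ * _).
by apply: eq_bigr => s' _; rewrite IH // first_state_rcons.
Qed.

Fixpoint choice_prob (sg : strat) (H g : hist S A) : R :=
  if g is p :: g' then
    (if p.1 \in Max then sg H p.1 p.2 else 1) * choice_prob sg (rcons H p) g'
  else 1.

Lemma choice_prob_cat sg H g1 g2 :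
  choice_prob sg H (g1 ++ g2) = choice_prob sg H g1 * choice_prob sg (H ++ g1) g2.
Proof.
elim: g1 H => [|p g1 IH] H /=; first by rewrite mul1r cats0.
by rewrite IH mulrA cat_rcons.
Qed.

Lemma choice_prob_rcons sg H g p : choice_prob sg H (rcons g p) =
  choice_prob sg H g * (if p.1 \in Max then sg (H ++ g) p.1 p.2 else 1).
Proof. by rewrite -cats1 choice_prob_cat /= mulr1. Qed.

Lemma choice_prob_ge0_le1 sg H g : max_strategy sg -> 0 <= choice_prob sg H g <= 1.
Proof.
move=> hsg; elim: g H => [|p g IH] H /=; first by rewrite ler01 lexx.
have /andP [w0 w1] : 0 <= (if p.1 \in Max then sg H p.1 p.2 else 1) <= 1.
  case: ifPn => pM; last by rewrite ler01 lexx.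
  have w := max_strategy_distr H hsg pM.
  by case: (w) => ? _ _; rewrite (distr_on_le1 _ w) andbT.
by case/andP: (IH (rcons H p)) => ? ?; rewrite mulr_ge0 ?mulr_ile1.
Qed.

Lemma choice_prob_ge0 sg H g : max_strategy sg -> 0 <= choice_prob sg H g.
Proof. by move=> /(choice_prob_ge0_le1 H g) /andP []. Qed.

Lemma choice_prob_le1 sg H g : max_strategy sg -> choice_prob sg H g <= 1.
Proof. by move=> /(choice_prob_ge0_le1 H g) /andP []. Qed.

Section Kuhn.
Variables (I : Type) (sigma : I -> strat) (pre : I -> hist S A) (L : (I -> R) -> R)
  (dflt : strat).
Hypotheses (sigma_max : forall x, max_strategy (sigma x)) (dflt_max : max_strategy dflt).

Definition prefix_prob x := choice_prob (sigma x) [::] (pre x).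
Definition cont_prob x g := choice_prob (sigma x) [::] (pre x ++ g).

Definition dominated (F : I -> R) :=
  (forall x, 0 <= F x) /\ exists2 C, 0 <= C & forall x, F x <= C * prefix_prob x.

(* [L] averages over the index set [I]; it need only be linear on dominated
   functions, which is all a countable mixture provides. *)
Hypothesis L_add : forall F G, dominated F -> dominated G ->
  L (fun x => F x + G x) = L F + L G.
Hypothesis L_scale : forall F c, dominated F -> 0 <= c -> L (fun x => c * F x) = c * L F.
Hypothesis L_mono : forall F G, dominated F -> dominated G -> (forall x, F x <= G x) ->
  L F <= L G.
Hypothesis L0 : L (fun _ => 0) = 0.

Lemma dominated0 : dominated (fun _ => 0).
Proof. by split=> //; exists 0 => // x; rewrite mul0r. Qed.

Lemma dominatedD F G : dominated F -> dominated G -> dominated (fun x => F x + G x).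
Proof.
move=> [F0 [C C0 FC]] [G0 [D D0 GD]]; split=> [x|]; first by rewrite addr_ge0.
by exists (C + D) => [|x]; rewrite ?addr_ge0 // mulrDl lerD.
Qed.

Lemma dominatedZ F c : dominated F -> 0 <= c -> dominated (fun x => c * F x).
Proof.
move=> [F0 [C C0 FC]] c0; split=> [x|]; first by rewrite mulr_ge0.
by exists (c * C) => [|x]; rewrite ?mulr_ge0 // -mulrA ler_wpM2l.
Qed.

Lemma dominated_sum (J : Type) (r : seq J) (P : pred J) (F : J -> I -> R) :
  (forall j, P j -> dominated (F j)) -> dominated (fun x => \sum_(j <- r | P j) F j x).
Proof.
move=> dF; elim: r => [|j r IH]; first by under eq_fun do rewrite big_nil; exact: dominated0.
have [Pj|nPj] := boolP (P j); last by under eq_fun do rewrite big_cons (negbTE nPj).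
by under eq_fun do rewrite big_cons Pj; exact: dominatedD (dF j Pj) IH.
Qed.

Lemma L_sum (J : Type) (r : seq J) (P : pred J) (F : J -> I -> R) :
  (forall j, P j -> dominated (F j)) ->
  L (fun x => \sum_(j <- r | P j) F j x) = \sum_(j <- r | P j) L (F j).
Proof.
move=> dF; elim: r => [|j r IH]; first by under eq_fun do rewrite big_nil; rewrite big_nil.
rewrite big_cons; have [Pj|nPj] := boolP (P j); last first.
  by under eq_fun do rewrite big_cons (negbTE nPj).
under eq_fun do rewrite big_cons Pj.
by rewrite L_add ?IH //; [exact: dF | exact: dominated_sum].
Qed.

Lemma cont_prob_rcons x g c a : cont_prob x (rcons g (c, a)) =
  cont_prob x g * (if c \in Max then sigma x (pre x ++ g) c a else 1).
Proof. by rewrite /cont_prob -rcons_cat choice_prob_rcons. Qed.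

Lemma cont_prob_le x g : cont_prob x g <= prefix_prob x.
Proof.
rewrite /cont_prob choice_prob_cat -[X in _ <= X]mulr1.
by rewrite ler_wpM2l ?choice_prob_ge0 ?choice_prob_le1.
Qed.

Lemma dominated_cont_probM g (r : I -> R) : (forall x, 0 <= r x <= 1) ->
  dominated (fun x => cont_prob x g * r x).
Proof.
move=> r01; split=> [x|]; first by case/andP: (r01 x) => r0 _; rewrite mulr_ge0 ?choice_prob_ge0.
exists 1 => // x; rewrite mul1r; apply: le_trans (cont_prob_le x g).
by case/andP: (r01 x) => _ r1; rewrite -[X in _ <= X]mulr1 ler_wpM2l ?choice_prob_ge0.
Qed.

Lemma dominated_cont_prob g : dominated (cont_prob^~ g).
Proof.
have := @dominated_cont_probM g (fun _ => 1) (fun _ => ltac:(by rewrite ler01 lexx)).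
by under eq_fun do rewrite mulr1.
Qed.

(* Choosing [b]
   with probability [mass (g, b) / mass g] merges the L-mixture into a single
   behaviour strategy, as in Kuhn's theorem. *)
Definition mass g := L (cont_prob^~ g).

Definition kuhn_strategy : strat := fun g c b =>
  if mass g == 0 then dflt g c b else mass (rcons g (c, b)) / mass g.

Lemma mass_ge0 g : 0 <= mass g.
Proof.
have [g0 _] := dominated_cont_prob g.
by rewrite -L0; apply: L_mono => //; [exact: dominated0 | exact: dominated_cont_prob].
Qed.

Lemma mass_rcons_min g c b : c \notin Max -> mass (rcons g (c, b)) = mass g.
Proof. by move=> cM; congr L; apply: funext => x; rewrite cont_prob_rcons (negbTE cM) mulr1. Qed.

Lemma mass_rcons_notAv g c b : c \in Max -> b \notin Av c -> mass (rcons g (c, b)) = 0.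
Proof.
move=> cM bA; rewrite -L0; congr L; apply: funext => x.
rewrite cont_prob_rcons cM.
by case: (max_strategy_distr (pre x ++ g) (sigma_max x) cM) => _ -> //; rewrite mulr0.
Qed.

Lemma mass_rcons_le g c b : c \in Max -> mass (rcons g (c, b)) <= mass g.
Proof.
move=> cM; apply: L_mono; [exact: dominated_cont_prob | exact: dominated_cont_prob |] => x.
rewrite cont_prob_rcons cM -[X in _ <= X]mulr1 ler_wpM2l ?choice_prob_ge0 //.
exact: distr_on_le1 (max_strategy_distr _ (sigma_max x) cM).
Qed.

Lemma mass_rcons_sum g c : c \in Max -> \sum_b mass (rcons g (c, b)) = mass g.
Proof.
move=> cM; pose F b x := cont_prob x (rcons g (c, b)).
rewrite -(@L_sum _ (index_enum A) xpredT F); last by move=> b _; exact: dominated_cont_prob.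
congr L; apply: funext => x; rewrite /F; under eq_bigr do rewrite cont_prob_rcons cM.
have [_ _ sum1] := max_strategy_distr (pre x ++ g) (sigma_max x) cM.
by rewrite -mulr_sumr sum1 mulr1.
Qed.

Lemma kuhn_strategy_max : max_strategy kuhn_strategy.
Proof.
move=> g c cM; rewrite /kuhn_strategy; case: eqP => [_|/eqP m0]; first exact: dflt_max.
split=> [a|]; first by rewrite divr_ge0 ?mass_ge0.
split=> [a aA|]; first by rewrite mass_rcons_notAv ?mul0r.
by rewrite -mulr_suml mass_rcons_sum ?divff.
Qed.

Lemma mass_turn_weight tau g c a :
  mass g * turn_weight kuhn_strategy tau g c a =
  mass (rcons g (c, a)) * (if c \in Max then 1 else tau g c a).
Proof.
rewrite /turn_weight; case: ifPn => cM; last by rewrite mass_rcons_min.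
rewrite mulr1 /kuhn_strategy; case: eqP => [m0|/eqP m0]; last by rewrite mulrC divfK.
by apply/eqP; rewrite m0 mul0r eq_sym eq_le mass_ge0 -m0 mass_rcons_le.
Qed.

Lemma cont_prob_turn_weight tau0 tau x g c a :
  (forall x g, tau0 (pre x ++ g) = tau g) ->
  cont_prob x g * turn_weight (sigma x) tau0 (pre x ++ g) c a =
  cont_prob x (rcons g (c, a)) * (if c \in Max then 1 else tau g c a).
Proof.
by move=> tau0E; rewrite cont_prob_rcons /turn_weight; case: ifP => _; rewrite ?tau0E mulr1.
Qed.

Theorem kuhn_reach_within tau0 tau T k g c :
  min_strategy tau0 -> min_strategy tau -> (forall x g, tau0 (pre x ++ g) = tau g) ->
  mass g * reach kuhn_strategy tau T k g c =
  L (fun x => cont_prob x g * reach (sigma x) tau0 T k (pre x ++ g) c).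
Proof.
move=> htau0 htau tau0E; elim: k g c => [|k IH] g c; have [cT|cT] := boolP (c \in T).
1,3: by under eq_fun do rewrite reach_within_target // mulr1; rewrite reach_within_target // mulr1.
  by rewrite /= (negbTE cT) mulr0; under eq_fun do rewrite mulr0; rewrite L0.
pose G a s' x := cont_prob x (rcons g (c, a)) *
  reach (sigma x) tau0 T k (pre x ++ rcons g (c, a)) s'.
pose coef a s' := delta c a s' * (if c \in Max then 1 else tau g c a).
have dG a s' : dominated (G a s').
  by apply: dominated_cont_probM => x; exact: reach_within_ge0_le1 (sigma_max x) htau0 _ _ _ _.
have coef0 a s' : a \in Av c -> 0 <= coef a s'.
  move=> aA; rewrite mulr_ge0 ?delta_ge0 //; case: ifPn => cM //.
  by case: (min_strategy_distr g htau cM).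
have integrand x : cont_prob x g * reach (sigma x) tau0 T k.+1 (pre x ++ g) c =
    \sum_(a in Av c) \sum_s' coef a s' * G a s' x.
  rewrite reach_withinS (negbTE cT) /expect_next mulr_sumr (@sum_Av c); last first.
    move=> a aA; have [_ -> //] := turn_weight_distr (pre x ++ g) c (sigma_max x) htau0.
    by rewrite !mul0r mulr0.
  apply: eq_bigr => a _; rewrite mulrA (cont_prob_turn_weight _ _ _ _ tau0E) !mulr_sumr.
  by apply: eq_bigr => s' _; rewrite /G /coef rcons_cat; ring.
under eq_fun do rewrite integrand.
have dGc a s' : a \in Av c -> dominated (fun x => coef a s' * G a s' x).
  by move=> aA; exact: dominatedZ (dG a s') (coef0 a s' aA).
rewrite L_sum; last by move=> a aA; apply: dominated_sum => s' _; exact: dGc.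
rewrite reach_withinS (negbTE cT) /expect_next mulr_sumr (@sum_Av c); last first.
  move=> a aA; rewrite mulrA mass_turn_weight; case: ifPn => cM.
    by rewrite mass_rcons_notAv ?mul0r.
  by case: (min_strategy_distr g htau cM) => _ -> //; rewrite mulr0 mul0r.
apply: eq_bigr => a aA; rewrite L_sum; last by move=> s' _; exact: dGc.
rewrite mulrA mass_turn_weight mulr_sumr; apply: eq_bigr => s' _.
by rewrite L_scale ?coef0 // /G -IH /coef; ring.
Qed.

End Kuhn.

Lemma finite_mix_strategy m (w : 'I_m -> R) (rho : 'I_m -> strat) (dflt : strat) :
  (forall j, 0 <= w j) -> \sum_j w j = 1 ->
  (forall j, max_strategy (rho j)) -> max_strategy dflt ->
  exists2 xi, max_strategy xi & forall tau T k c, min_strategy tau ->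
    reach xi tau T k [::] c = \sum_j w j * reach (rho j) tau T k [::] c.
Proof.
move=> w0 w1 rho_max dflt_max; pose L (F : 'I_m -> R) := \sum_j w j * F j.
have L_add F G : L (fun j => F j + G j) = L F + L G.
  by rewrite /L -big_split; apply: eq_bigr => j _; rewrite mulrDr.
have L_scale F c : L (fun j => c * F j) = c * L F.
  by rewrite /L mulr_sumr; apply: eq_bigr => j _; rewrite mulrCA.
have L_mono F G : (forall j, F j <= G j) -> L F <= L G.
  by move=> FG; apply: ler_sum => j _; rewrite ler_wpM2l.
have L0 : L (fun _ => 0) = 0 by rewrite /L big1 // => j _; rewrite mulr0.
have mass_nil : mass rho (fun _ => [::]) L [::] = 1.
  by rewrite /mass /L -w1; apply: eq_bigr => j _; rewrite /cont_prob /= mulr1.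
exists (kuhn_strategy rho (fun _ => [::]) L dflt).
  exact: kuhn_strategy_max rho_max dflt_max (fun F G _ _ => L_add F G)
    (fun F G _ _ => L_mono F G) L0.
move=> tau T k c htau; rewrite -[LHS]mul1r -mass_nil.
rewrite (kuhn_reach_within dflt rho_max (fun F G _ _ => L_add F G) (fun F c _ _ => L_scale F c)
  (fun F G _ _ => L_mono F G) L0 T k [::] c htau htau) //.
by apply: eq_bigr => j _; rewrite /cont_prob /= mul1r.
Qed.

Definition pick_strategy (HAv : forall s, exists a, a \in Av s) : strat :=
  fun _ c a => (a == xchoose (HAv c))%:R.

Lemma pick_strategyP HAv (P : pred S) : is_strategy Av P (pick_strategy HAv).
Proof.
move=> h c _; rewrite /pick_strategy; split=> [a|]; first exact: ler0n.
split=> [a aA|]; last by rewrite (bigD1 (xchoose (HAv c))) //= ?eqxx big1 ?addr0 // => a /negbTE ->.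
by case: eqP aA => // ->; rewrite (xchooseP (HAv c)).
Qed.

Section Loop.
Variable s : S.
Hypothesis sMax : s \in Max.

Definition exit_act b := exits Av delta [set s] s b.
Definition loop_act b := (b \in Av s) && ~~ exit_act b.

Lemma exit_act_Av b : exit_act b -> b \in Av s.
Proof. by case/and3P. Qed.

Lemma sum_exit_loop (F : A -> R) : (forall b, b \notin Av s -> F b = 0) ->
  \sum_b F b = \sum_(b | exit_act b) F b + \sum_(b | loop_act b) F b.
Proof.
move=> F0; rewrite (bigID exit_act) /=; congr (_ + _).
rewrite [RHS]big_mkcond [LHS]big_mkcond; apply: eq_bigr => b _.
by rewrite /loop_act; case: (exit_act b); rewrite ?andbF ?andbT //; case: ifPn => // /F0.
Qed.

Lemma loop_act_delta b s' : loop_act b -> delta s b s' = (s' == s)%:R.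
Proof.
case/andP=> bA nE; have [d0 d1] := delta_distr bA.
have out s2 : s2 != s -> delta s b s2 = 0.
  move=> ne; apply/eqP; rewrite eq_le d0 andbT leNgt; apply: contra nE => pos.
  by rewrite /exit_act /exits set11 bA /=; apply/existsP; exists s2; rewrite pos inE.
case: eqP => [->|/eqP ne]; last exact: out.
by move: d1; rewrite (bigD1 s) //= big1 ?addr0 // => s2; exact: out.
Qed.

Lemma loop_act_expect b (f : S -> R) : loop_act b -> \sum_s' delta s b s' * f s' = f s.
Proof. by move=> Lb; under eq_bigr do rewrite loop_act_delta //; exact: sum_pick. Qed.

Fixpoint loop_words t : seq (seq A) :=
  if t is t'.+1 then [seq rcons x b | x <- loop_words t', b <- enum loop_act]
  else [:: [::]].

Lemma sum_loop_wordsS t (F : seq A -> R) :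
  \sum_(x <- loop_words t.+1) F x = \sum_(x <- loop_words t) \sum_(b | loop_act b) F (rcons x b).
Proof. by rewrite big_allpairs_dep; apply: eq_bigr => x _; rewrite big_enum. Qed.

Lemma eq_sum_loop_words t (F G : seq A -> R) : (forall x, all loop_act x -> F x = G x) ->
  \sum_(x <- loop_words t) F x = \sum_(x <- loop_words t) G x.
Proof.
elim: t F G => [|t IH] F G FG; first by rewrite !big_seq1 FG.
rewrite !sum_loop_wordsS; apply: IH => x Lx; apply: eq_bigr => b Lb.
by apply: FG; rewrite all_rcons Lb.
Qed.

Definition partial_series (F : seq A -> R) K := \sum_(t < K) \sum_(x <- loop_words t) F x.
Definition series F := sup (range (partial_series F)).

Lemma partial_series_nondecr F : (forall x, 0 <= F x) -> nondecreasing_seq (partial_series F).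
Proof. by move=> F0 K; rewrite /partial_series big_ord_recr /= lerDl sumr_ge0. Qed.

Definition loop_hist (x : seq A) : hist S A := [seq (s, b) | b <- x].

Lemma loop_hist_rcons x b : loop_hist (rcons x b) = rcons (loop_hist x) (s, b).
Proof. exact: map_rcons. Qed.

(* Filtering makes [exit_hist b x] a history that loops at [s] and then exits
   through [b] for every [x], not only for loop words. *)
Definition exit_hist b x := loop_hist (filter loop_act x) ++ [:: (s, b)].

Lemma partial_series_exit_hist (F : hist S A -> R) b K :
  partial_series (fun x => F (exit_hist b x)) K =
  partial_series (fun x => F (loop_hist x ++ [:: (s, b)])) K.
Proof.
apply: eq_bigr => t _; apply: eq_sum_loop_words => x /all_filterP Lx.
by rewrite /exit_hist Lx.
Qed.

Fixpoint split_exit (h : hist S A) : option (A * hist S A) :=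
  if h is (c, a) :: h' then
    if (c == s) && loop_act a then split_exit h' else Some (a, h')
  else None.

Lemma split_exit_hist b x g : exit_act b -> split_exit (exit_hist b x ++ g) = Some (b, g).
Proof.
move=> Eb; rewrite /exit_hist -catA; elim: x => [|a x IH] /=.
  by rewrite eqxx /loop_act Eb andbF.
by case: ifP => La //=; rewrite eqxx La.
Qed.

Definition glue_after_exit (tb : A -> strat) (t0 : strat) : strat := fun h =>
  if split_exit h is Some (b, g) then tb b g else t0 h.

Lemma glue_after_exitP (P : pred S) tb t0 : (forall b, is_strategy Av P (tb b)) ->
  is_strategy Av P t0 -> is_strategy Av P (glue_after_exit tb t0).
Proof.
move=> htb ht0 h c; rewrite /glue_after_exit.
by case: (split_exit h) => [[b g]|]; [apply: htb | apply: ht0].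
Qed.

Section FirstExit.
Variable sg : strat.
Hypothesis hsg : max_strategy sg.

Lemma choice_prob_rcons_s g b :
  choice_prob sg [::] (rcons g (s, b)) = choice_prob sg [::] g * sg g s b.
Proof. by rewrite choice_prob_rcons /= sMax. Qed.

Definition stay_prob t := \sum_(x <- loop_words t) choice_prob sg [::] (loop_hist x).
Definition exit_prob t := \sum_(x <- loop_words t) \sum_(b | exit_act b)
  choice_prob sg [::] (loop_hist x ++ [:: (s, b)]).

Lemma stay_probS t : stay_prob t = exit_prob t + stay_prob t.+1.
Proof.
rewrite /stay_prob /exit_prob sum_loop_wordsS -big_split; apply: eq_bigr => x _ /=.
have [_ sgAv sg1] := max_strategy_distr (loop_hist x) hsg sMax.
rewrite -[LHS]mulr1 -[X in _ * X]sg1 mulr_sumr.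
rewrite (@sum_exit_loop (fun b => _ * sg _ s b)); last by move=> b /sgAv ->; rewrite mulr0.
by congr (_ + _); apply: eq_bigr => b _; rewrite ?loop_hist_rcons ?cats1 choice_prob_rcons_s.
Qed.

Lemma sum_exit_stay_prob K : \sum_(t < K) exit_prob t + stay_prob K = 1.
Proof.
elim: K => [|K IH]; first by rewrite big_ord0 add0r /stay_prob big_seq1.
by rewrite big_ord_recr /= -addrA -stay_probS.
Qed.

Lemma sum_exit_prob_le1 K : \sum_(t < K) exit_prob t <= 1.
Proof.
rewrite -(sum_exit_stay_prob K) lerDl; apply: sumr_ge0 => x _; exact: choice_prob_ge0.
Qed.

Section LoopUnfolding.
Variables (tau : strat) (T : {set S}).
Hypotheses (htau : min_strategy tau) (sT : s \notin T).

(* Split the plays from [s] by the number [t] of loop moves before the first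
   exit: [stay_reach t j] gathers those still looping after [t] moves, run for
   [j] more steps, and [exit_reach t j] those leaving at move [t + 1]. *)
Definition stay_reach t j := \sum_(x <- loop_words t)
  choice_prob sg [::] (loop_hist x) * reach sg tau T j (loop_hist x) s.

Definition exit_term b s' j x :=
  choice_prob sg [::] (loop_hist x ++ [:: (s, b)]) *
  reach sg tau T j (loop_hist x ++ [:: (s, b)]) s'.

Definition exit_reach t j := \sum_(x <- loop_words t) \sum_(b | exit_act b)
  \sum_s' delta s b s' * exit_term b s' j x.

Lemma stay_reachS t j : stay_reach t j.+1 = exit_reach t j + stay_reach t.+1 j.
Proof.
rewrite /stay_reach /exit_reach sum_loop_wordsS -big_split; apply: eq_bigr => x _.
have [_ sgAv _] := max_strategy_distr (loop_hist x) hsg sMax.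
rewrite reach_withinS (negbTE sT) /expect_next /turn_weight sMax mulr_sumr.
rewrite (@sum_exit_loop (fun b => _ * (sg _ s b * _))); last first.
  by move=> b /sgAv ->; rewrite mul0r mulr0.
congr (_ + _); apply: eq_bigr => b Bb; rewrite mulrA -choice_prob_rcons_s.
  by rewrite mulr_sumr; apply: eq_bigr => s' _; rewrite /exit_term cats1 mulrCA.
by rewrite loop_act_expect // loop_hist_rcons.
Qed.

Lemma exit_reach_mono t j K : (j <= K)%N -> exit_reach t j <= exit_reach t K.
Proof.
move=> jK; apply: ler_sum => x _; apply: ler_sum => b Eb; apply: ler_sum => s' _.
rewrite ler_wpM2l ?delta_ge0 ?exit_act_Av // ler_wpM2l ?choice_prob_ge0 //.
exact: reach_within_mono.
Qed.

Lemma stay_reach_le K j t : (j <= K)%N -> stay_reach t j <= \sum_(i < j) exit_reach (t + i) K.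
Proof.
elim: j t => [|j IH] t jK.
  by rewrite big_ord0 /stay_reach big1_seq // => x _; rewrite /= (negbTE sT) mulr0.
rewrite stay_reachS big_ord_recl addn0; apply: lerD; first exact/exit_reach_mono/ltnW.
apply: le_trans (IH t.+1 (ltnW jK)) _; apply: ler_sum => i _.
by rewrite lift0 addSnnS.
Qed.

Lemma sum_exit_reach K j : \sum_(i < K) exit_reach i j =
  \sum_(b | exit_act b) \sum_s' delta s b s' * partial_series (exit_term b s' j) K.
Proof.
rewrite /partial_series /exit_reach; under eq_bigr do rewrite exchange_big.
rewrite exchange_big; apply: eq_bigr => b Eb; under eq_bigr do rewrite exchange_big.
rewrite exchange_big; apply: eq_bigr => s' _.
by rewrite mulr_sumr; apply: eq_bigr => t _; rewrite mulr_sumr.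
Qed.

Lemma reach_within_le_exit_series K : reach sg tau T K [::] s <=
  \sum_(b | exit_act b) \sum_s' delta s b s' * partial_series (exit_term b s' K) K.
Proof.
rewrite -sum_exit_reach; have := stay_reach_le 0 (leqnn K).
by rewrite /stay_reach big_seq1 mul1r; under eq_bigr do rewrite add0n.
Qed.

End LoopUnfolding.

(* The Maximizer's behaviour after leaving [s] through [b], averaged over the
   loop histories preceding this exit, and the probability of that exit. *)
Definition exit_strategy b := kuhn_strategy (fun _ => sg) (exit_hist b) series sg.
Definition exit_weight b := mass (fun _ => sg) (exit_hist b) series [::].

Lemma exit_weightE b : exit_weight b = series (fun x => choice_prob sg [::] (exit_hist b x)).
Proof.
by rewrite /exit_weight /mass; congr series; apply: funext => x; rewrite /cont_prob cats0.
Qed.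

Section ExitStrategy.
Variable b : A.
Hypothesis Eb : exit_act b.
Local Notation dom := (dominated (fun _ => sg) (exit_hist b)).

Lemma partial_series_prefix_le1 K :
  partial_series (prefix_prob (fun _ => sg) (exit_hist b)) K <= 1.
Proof.
apply: le_trans (sum_exit_prob_le1 K); rewrite (partial_series_exit_hist (choice_prob sg [::])).
apply: ler_sum => t _; apply: ler_sum => x _.
by rewrite (bigD1 b) //= lerDl; apply: sumr_ge0 => *; exact: choice_prob_ge0.
Qed.

Lemma dominated_partial_series_ub F : dom F -> has_ubound (range (partial_series F)).
Proof.
case=> F0 [C C0 FC]; exists C => _ [K _ <-].
apply: le_trans (_ : C * partial_series (prefix_prob (fun _ => sg) (exit_hist b)) K <= C).
  rewrite /partial_series mulr_sumr; apply: ler_sum => t _; rewrite mulr_sumr.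
  by apply: ler_sum => x _; exact: FC.
by rewrite -[X in _ <= X]mulr1 ler_wpM2l ?partial_series_prefix_le1.
Qed.

Lemma dominated_partial_series_nondecr F : dom F -> nondecreasing_seq (partial_series F).
Proof. by case=> F0 _; exact: partial_series_nondecr. Qed.

Lemma partial_series_le_series F K : dom F -> partial_series F K <= series F.
Proof. by move=> dF; apply/sup_range_ub/dominated_partial_series_ub. Qed.

Lemma seriesD F G : dom F -> dom G -> series (fun x => F x + G x) = series F + series G.
Proof.
move=> dF dG; rewrite /series.
have -> : partial_series (fun x => F x + G x) = fun K => partial_series F K + partial_series G K.
  apply: funext => K; rewrite /partial_series -big_split.
  by apply: eq_bigr => t _; rewrite big_split.
apply: sup_rangeD;
  by [apply: dominated_partial_series_nondecr | apply: dominated_partial_series_ub].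
Qed.

Lemma seriesZ F c : dom F -> 0 <= c -> series (fun x => c * F x) = c * series F.
Proof.
move=> dF c0; rewrite /series.
have -> : partial_series (fun x => c * F x) = fun K => c * partial_series F K.
  apply: funext => K; rewrite /partial_series mulr_sumr.
  by apply: eq_bigr => t _; rewrite mulr_sumr.
exact/sup_rangeZ/dominated_partial_series_ub.
Qed.

Lemma le_series F G : dom F -> dom G -> (forall x, F x <= G x) -> series F <= series G.
Proof.
move=> _ dG FG; apply: le_sup_range (dominated_partial_series_ub dG) _ => K.
by apply: ler_sum => t _; apply: ler_sum => x _.
Qed.

Lemma series0 : series (fun _ => 0) = 0.
Proof.
rewrite /series (_ : partial_series _ = fun _ => 0) ?sup_range_cst //.
by apply: funext => K; rewrite /partial_series big1 // => t _; rewrite big1.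
Qed.

Lemma exit_strategy_max : max_strategy (exit_strategy b).
Proof. exact: kuhn_strategy_max (fun _ => hsg) hsg seriesD le_series series0. Qed.

Lemma exit_weight_ge0 : 0 <= exit_weight b.
Proof. exact: mass_ge0 (fun _ => hsg) le_series series0 [::]. Qed.

Lemma exit_partial_series_le tau tb T K s' : min_strategy tau -> min_strategy tb ->
  (forall x g, tau (exit_hist b x ++ g) = tb g) ->
  partial_series (exit_term tau T b s' K) K <=
  exit_weight b * reach (exit_strategy b) tb T K [::] s'.
Proof.
move=> htau htb tauE; pose F h := choice_prob sg [::] h * reach sg tau T K h s'.
rewrite /exit_weight /exit_strategy (kuhn_reach_within sg (fun _ => hsg) seriesD seriesZ
  le_series series0 T K [::] s' htau htb tauE).
apply: le_trans (partial_series_le_series K _); last first.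
  apply: (@dominated_cont_probM _ _ (exit_hist b) (fun _ => hsg) [::]
    (fun x => reach sg tau T K (exit_hist b x ++ [::]) s')) => x.
  exact: reach_within_ge0_le1.
have -> : (fun x => cont_prob (fun _ => sg) (exit_hist b) x [::] *
                    reach sg tau T K (exit_hist b x ++ [::]) s') = F \o exit_hist b.
  by apply: funext => x; rewrite /cont_prob cats0.
by rewrite (partial_series_exit_hist F).
Qed.

End ExitStrategy.

Lemma sum_exit_weight_le1 : \sum_(b | exit_act b) exit_weight b <= 1.
Proof.
pose u b := partial_series (fun x => choice_prob sg [::] (exit_hist b x)).
have u_nd b : nondecreasing_seq (u b).
  by apply: partial_series_nondecr => x; exact: choice_prob_ge0.
have u_ub b : exit_act b -> has_ubound (range (u b)).
  by move=> Eb; exists 1 => _ [K _ <-]; exact: partial_series_prefix_le1.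
under eq_bigr do rewrite exit_weightE -[series _]mul1r.
rewrite -(sup_range_sum _ (fun b _ => @ler01 R) (fun b _ => u_nd b) u_ub).
apply: sup_range_le => K; apply: le_trans (sum_exit_prob_le1 K); rewrite /u.
under eq_bigr do rewrite mul1r (partial_series_exit_hist (choice_prob sg [::])).
rewrite exchange_big; apply: ler_sum => t _.
by rewrite exchange_big.
Qed.

Section ExitValue.
Variable HAv : forall s, exists a, a \in Av s.

Definition exit_value b T s' :=
  inf [set prob (exit_strategy b) t T s' | t in min_strategy].

Lemma exit_values_nonempty b T s' :
  [set prob (exit_strategy b) t T s' | t in min_strategy] !=set0.
Proof.
exists (prob (exit_strategy b) (pick_strategy HAv) T s'), (pick_strategy HAv) => //.
exact: pick_strategyP.
Qed.

Section ExitValueBounds.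
Variables (b : A) (T : {set S}) (s' : S).
Hypothesis Eb : exit_act b.

Lemma exit_values_lb : lbound [set prob (exit_strategy b) t T s' | t in min_strategy] 0.
Proof. by move=> _ [t ht <-]; exact: reach_prob_ge0 (exit_strategy_max Eb) ht _ _. Qed.

Lemma exit_value_ge0 : 0 <= exit_value b T s'.
Proof. exact: lb_le_inf (exit_values_nonempty b T s') exit_values_lb. Qed.

Lemma exit_value_le t : min_strategy t -> exit_value b T s' <= prob (exit_strategy b) t T s'.
Proof. by move=> ht; apply: ge_inf; [exists 0; exact: exit_values_lb | exists t]. Qed.

End ExitValueBounds.

Lemma le_sum_exit_prob (T : {set S}) (v : R) (tt : A * S -> strat) : s \notin T ->
  (forall p, min_strategy (tt p)) -> (forall tau, min_strategy tau -> v <= prob sg tau T s) ->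
  v <= \sum_(b | exit_act b) \sum_s' delta s b s' *
         (exit_weight b * prob (exit_strategy b) (tt (b, s')) T s').
Proof.
(* The Minimizer plays [tt (b, s')] once the play has left [s] through [b]
   into [s'], and arbitrarily before. *)
move=> sT htt hv; pose tb b : strat := fun g c => tt (b, first_state g c) g c.
have htb b : min_strategy (tb b) by move=> g c; exact: htt.
pose tau := glue_after_exit tb (pick_strategy HAv).
have htau : min_strategy tau by apply: glue_after_exitP => //; exact: pick_strategyP.
apply: le_trans (hv tau htau) _; apply: sup_range_le => K.
apply: le_trans (reach_within_le_exit_series htau sT K) _.
apply: ler_sum => b Eb; apply: ler_sum => s' _; rewrite ler_wpM2l ?delta_ge0 ?exit_act_Av //.
apply: le_trans (exit_partial_series_le Eb T K s' htau (htb b) _) _.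
  by move=> x g; rewrite /tau /glue_after_exit split_exit_hist.
rewrite ler_wpM2l ?exit_weight_ge0 //.
rewrite (@reach_within_eq_from s' _ (exit_strategy b) _ (tt (b, s'))) //.
  exact: reach_within_le_prob (exit_strategy_max Eb) (htt _) _ _ _.
by move=> g c g_s'; rewrite /tb g_s'.
Qed.

Lemma le_sum_exit_value (T : {set S}) (v : R) : s \notin T ->
  (forall tau, min_strategy tau -> v <= prob sg tau T s) ->
  v <= \sum_(b | exit_act b) exit_weight b * \sum_s' delta s b s' * exit_value b T s'.
Proof.
move=> sT hv; apply/ler_addgt0Pr => e e0.
have near_opt (p : A * S) : exists t, min_strategy t /\
    prob (exit_strategy p.1) t T p.2 < exit_value p.1 T p.2 + e.
  have lt : exit_value p.1 T p.2 < exit_value p.1 T p.2 + e by rewrite ltrDl.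
  by have [_ [t ht <-]] := inf_lt (exit_values_nonempty p.1 T p.2) lt; exists t.
have [tt htt] := choice near_opt.
apply: le_trans (le_sum_exit_prob sT (fun p => (htt p).1) hv) _.
apply: le_trans (_ : \sum_(b | exit_act b) \sum_s' delta s b s' *
    (exit_weight b * (exit_value b T s' + e)) <= _).
  apply: ler_sum => b Eb; apply: ler_sum => s' _.
  by rewrite !ler_wpM2l ?delta_ge0 ?exit_weight_ge0 ?exit_act_Av // ltW // (htt (b, s')).2.
have -> : \sum_(b | exit_act b) \sum_s' delta s b s' * (exit_weight b * (exit_value b T s' + e)) =
    \sum_(b | exit_act b) exit_weight b * \sum_s' delta s b s' * exit_value b T s' +
    e * \sum_(b | exit_act b) exit_weight b.
  rewrite mulr_sumr -big_split; apply: eq_bigr => b Eb.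
  have [_ d1] := delta_distr (exit_act_Av Eb).
  transitivity (\sum_s' (exit_weight b * (delta s b s' * exit_value b T s') +
                         e * exit_weight b * delta s b s')).
    by apply: eq_bigr => s' _; ring.
  by rewrite big_split -!mulr_sumr d1 mulr1.
by rewrite lerD2l -[X in _ <= X]mulr1 ler_wpM2l ?(ltW e0) ?sum_exit_weight_le1.
Qed.

End ExitValue.
End FirstExit.
End Loop.

Section Achievable.
Variable HAv : forall s, exists a, a \in Av s.
Variables (n : nat) (Tobj : 'I_n -> {set S}) (s : S).
Hypothesis sMax : s \in Max.
Local Notation ach := (achievable Max Av delta Tobj).
Local Notation union := (exit_union Max Av delta Tobj ach [set s]).
Local Notation has_exit := [exists s0, exists a, exits Av delta [set s] s0 a && (s0 \in Max)].

Lemma pick_strategy_max : max_strategy (pick_strategy HAv).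
Proof. exact: pick_strategyP. Qed.

Lemma pick_strategy_min : min_strategy (pick_strategy HAv).
Proof. exact: pick_strategyP. Qed.

Lemma achievable_le1 s' v i : ach s' v -> v i <= 1.
Proof.
case=> _ [sg [hsg hv]]; apply: le_trans (hv _ pick_strategy_min i) _.
exact: reach_prob_le1 hsg pick_strategy_min _ _.
Qed.

Lemma achievable_of_bound s0 (v : vec R n) xi : max_strategy xi ->
  (forall i, 0 <= v i) -> (forall i, v i <= 1) ->
  (forall i tau, s0 \notin Tobj i -> min_strategy tau -> v i <= prob xi tau (Tobj i) s0) ->
  ach s0 v.
Proof.
move=> xi_max v0 v1 vle; split=> //; exists xi; split=> // tau htau i.
by have [s0T|s0T] := boolP (s0 \in Tobj i); [rewrite reach_prob_target | exact: vle].
Qed.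

Lemma ind_obj_ge0 s0 i : 0 <= ind_obj R Tobj s0 i.
Proof. by rewrite /ind_obj; case: ifP => _; [exact: ler01 | exact: lexx]. Qed.

Lemma exit_union0 : union (fun _ => 0).
Proof.
rewrite /exit_union; case: ifP => // /existsP [s0 /existsP [a /andP [ex s0M]]].
exists s0, a; split=> //; split=> //; split.
  2: by split=> //; exists (fun _ => 1) => // i; exact: ler01.
exists (fun _ => 0), (fun _ => 0); split.
  by split=> //; exists (ind_obj R Tobj s0) => // i; exact: ind_obj_ge0.
split; last by apply: funext => i; rewrite addr0.
exists (fun _ _ => 0); split.
  move=> s'; apply: (achievable_of_bound pick_strategy_max) => // i tau _ htau.
  exact: reach_prob_ge0 pick_strategy_max htau _ _.
by apply: funext => i; rewrite big1 // => s' _; rewrite mulr0.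
Qed.

Lemma exit_union_point b (y : S -> vec R n) : exit_act s b -> (forall s', ach s' (y s')) ->
  union (fun i => \sum_s' delta s b s' * y s' i).
Proof.
move=> Eb yA; rewrite /exit_union ifT; last first.
  by apply/existsP; exists s; apply/existsP; exists b; apply/andP.
have [d0 d1] := delta_distr (exit_act_Av Eb).
have y0 s' i : 0 <= y s' i by case: (yA s').
exists s, b; split=> //; split=> //; split.
  exists (fun _ => 0), (fun i => \sum_s' delta s b s' * y s' i); split.
    by split=> //; exists (ind_obj R Tobj s) => // i; exact: ind_obj_ge0.
  by split; [exists y | apply: funext => i; rewrite add0r].
split=> [i|]; first by apply: sumr_ge0 => s' _; rewrite mulr_ge0.
exists (fun _ => 1) => // i; rewrite -d1; apply: ler_sum => s' _.
by rewrite -[X in _ <= X]mulr1 ler_wpM2l // (achievable_le1 _ (yA s')).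
Qed.

Lemma achievable_scaled_exit_value sg b (t : vec R n) s' : max_strategy sg -> exit_act s b ->
  (forall i, 0 <= t i <= 1) -> ach s' (fun i => t i * exit_value s sg b (Tobj i) s').
Proof.
move=> hsg Eb t01; split=> [i|].
  by case/andP: (t01 i) => t0 _; rewrite mulr_ge0 ?exit_value_ge0.
exists (exit_strategy s sg b); split=> [|tau htau i]; first exact: exit_strategy_max.
apply: le_trans (exit_value_le sMax hsg (Tobj i) s' Eb htau).
case/andP: (t01 i) => _ t1; rewrite -[X in _ <= X]mul1r ler_wpM2r //.
exact: exit_value_ge0.
Qed.

Lemma achievable_sub_best_exit v : ach s v -> best_exit Max Av delta Tobj ach [set s] v.
Proof.
move=> vA; case: (vA) => v0 [sg [hsg hv]].
pose W b := exit_weight s sg b; pose Y b i s' := exit_value s sg b (Tobj i) s'.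
pose C i := \sum_(b | exit_act s b) W b * \sum_s' delta s b s' * Y b i s'.
pose target i := if s \in Tobj i then 0 else v i.
have target_le i : 0 <= target i <= C i.
  rewrite /target; case: ifPn => sT.
    rewrite lexx sumr_ge0 // => b Eb; rewrite mulr_ge0 ?exit_weight_ge0 ?sumr_ge0 // => s' _.
    by rewrite mulr_ge0 ?delta_ge0 ?exit_act_Av ?exit_value_ge0.
  by rewrite v0 le_sum_exit_value // => tau htau; exact: hv.
(* A single strategy bounds all coordinates at once, so rescaling each
   coordinate of its values keeps the vector achievable. *)
have [t tP] := choice (fun i => ratio_le1 (target_le i)).
have t01 i : 0 <= t i <= 1 by case: (tP i).
pose p b i := \sum_s' delta s b s' * (t i * Y b i s').
have pU b : exit_act s b -> union (p b).
  by move=> Eb; apply: exit_union_point => // s'; exact: achievable_scaled_exit_value.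
have c_conv : conv union (fun i => \sum_(b | exit_act s b) W b * p b i).
  apply: conv_subprob_comb => //; first exact: exit_union0.
    by move=> b Eb; exact: exit_weight_ge0.
  exact: sum_exit_weight_le1.
have cE i : \sum_(b | exit_act s b) W b * p b i = target i.
  case: (tP i) => _ <-; rewrite /C mulr_sumr; apply: eq_bigr => b _.
  rewrite /p mulrCA; congr (_ * _).
  by rewrite mulr_sumr; apply: eq_bigr => s' _; exact: mulrCA.
split; last by split=> //; exists (fun _ => 1) => // i; exact: achievable_le1 vA.
exists (fun i => v i - target i), (fun i => \sum_(b | exit_act s b) W b * p b i).
split; last by split=> //; apply: funext => i; rewrite cE subrK.
split=> [i|]; first by rewrite /target subr_ge0; case: ifP.
exists (fun i => \sum_(s0 in [set s]%SET) ind_obj R Tobj s0 i) => // i.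
rewrite big_set1 /target /ind_obj; case: ifP => _; last by rewrite subrr.
by rewrite subr0; exact: achievable_le1 vA.
Qed.

Definition step_strategy (a : A) (th : S -> strat) : strat := fun g c =>
  if g is _ :: g' then th (first_state g' c) g' c
  else if c == s then fun b => (b == a)%:R else pick_strategy HAv [::] c.

Lemma step_strategy_max a th : a \in Av s -> (forall s', max_strategy (th s')) ->
  max_strategy (step_strategy a th).
Proof.
move=> aA th_max [|p g] c cM /=; last exact: th_max.
case: eqP => [->|_]; last exact: pick_strategy_max.
split=> [b|]; first exact: ler0n.
split=> [b|]; first by case: eqP => // ->; rewrite aA.
by rewrite (eq_bigr (fun b => (b == a)%:R * 1)) ?sum_pick // => b _; rewrite mulr1.
Qed.

Lemma reach_step_strategy a th tau (T : {set S}) k : s \notin T ->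
  reach (step_strategy a th) tau T k.+1 [::] s =
  \sum_s' delta s a s' * reach (th s') (shift_strategy [:: (s, a)] tau) T k [::] s'.
Proof.
move=> sT; rewrite reach_withinS (negbTE sT) /expect_next /turn_weight sMax /= eqxx sum_pick.
apply: eq_bigr => s' _; congr (_ * _).
rewrite -[[:: (s, a)]]cats0 reach_within_shift.
by apply: (@reach_within_eq_from s') => // g c g_s'; rewrite /shift_strategy /= g_s'.
Qed.

Lemma step_mix_strategy m (w : 'I_m -> R) (a : 'I_m -> A) (th : 'I_m -> S -> strat) :
  (forall j, 0 <= w j) -> \sum_j w j = 1 -> (forall j, a j \in Av s) ->
  (forall j s', max_strategy (th j s')) ->
  exists2 xi, max_strategy xi & forall tau (T : {set S}), min_strategy tau -> s \notin T ->
    \sum_j w j * \sum_s' delta s (a j) s' *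
      prob (th j s') (shift_strategy [:: (s, a j)] tau) T s' <= prob xi tau T s.
Proof.
move=> w0 w1 aA th_max.
have [xi xi_max xiE] := finite_mix_strategy w0 w1
  (fun j => step_strategy_max (aA j) (th_max j)) pick_strategy_max.
exists xi => // tau T htau sT.
pose u (q : 'I_m * S) k :=
  reach (th q.1 q.2) (shift_strategy [:: (s, a q.1)] tau) T k [::] q.2.
have htau' j : min_strategy (shift_strategy [:: (s, a j)] tau) by exact: shift_strategyP.
have u_nd q : nondecreasing_seq (u q) by exact: reach_within_nondecr.
have u_ub q : has_ubound (range (u q)).
  by exists 1 => _ [k _ <-]; exact: reach_within_le1.
have c0 (q : 'I_m * S) : true && true -> 0 <= w q.1 * delta s (a q.1) q.2.
  by move=> _; rewrite mulr_ge0 ?delta_ge0.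
under eq_bigr do rewrite mulr_sumr.
under eq_bigr do under eq_bigr do rewrite mulrA.
rewrite pair_big /= -(sup_range_sum _ c0 (fun q _ => u_nd q) (fun q _ => u_ub q)).
apply: sup_range_le => k; apply: le_trans (reach_within_le_prob xi_max htau T k.+1 s).
rewrite xiE // -(pair_big xpredT xpredT (fun j s' => w j * delta s (a j) s' * u (j, s') k)).
apply: ler_sum => j _.
by rewrite reach_step_strategy // mulr_sumr; apply: ler_sum => s' _; rewrite mulrA.
Qed.

Lemma exit_union_witness p : union p -> has_exit ->
  exists q : A * (S -> strat), [/\ q.1 \in Av s, forall s', max_strategy (q.2 s') &
    forall i tau, s \notin Tobj i -> min_strategy tau ->
      p i <= \sum_s' delta s q.1 s' * prob (q.2 s') tau (Tobj i) s'].
Proof.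
rewrite /exit_union => + ex; rewrite ex => -[s0 [a [ex_a [_ [[d [z [dle [[y [yA ->]] ->]]]] _]]]]].
have [/set1P s0s aA _] := and3P ex_a; subst s0.
have [th hth] := choice (fun s' => (yA s').2).
exists (a, th); split=> // [s'|i tau sT htau /=]; first by case: (hth s').
have -> : d i = 0.
  case: dle => d0 [_ -> dle]; apply/eqP; rewrite eq_le d0 andbT.
  by have := dle i; rewrite /ind_obj (negbTE sT).
rewrite add0r; apply: ler_sum => s' _; rewrite ler_wpM2l ?delta_ge0 //.
by case: (hth s') => _; apply.
Qed.

Lemma best_exit_sub_achievable v : best_exit Max Av delta Tobj ach [set s] v -> ach s v.
Proof.
move=> [[x [y [[x0 [_ -> xle]] [[m [w [p [w0 [w1 [pU ->]]]]]] ->]]]] [v0 [_ -> v1]]].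
have x_out i : s \notin Tobj i -> x i = 0.
  move=> sT; apply/eqP; rewrite eq_le x0 andbT.
  by have := xle i; rewrite big_set1 /ind_obj (negbTE sT).
have [ex|nex] := boolP has_exit.
  have [q hq] := choice (fun j => exit_union_witness (pU j) ex).
  have qA j : (q j).1 \in Av s by case: (hq j).
  have q_max j s' : max_strategy ((q j).2 s') by case: (hq j).
  have [xi xi_max xi_ge] := step_mix_strategy w0 w1 qA q_max.
  apply: (achievable_of_bound xi_max) => // i tau sT htau; rewrite x_out // add0r.
  apply: le_trans (xi_ge tau _ htau sT); apply: ler_sum => j _; rewrite ler_wpM2l //.
  by case: (hq j) => _ _; apply=> //; exact: shift_strategyP.
apply: (achievable_of_bound pick_strategy_max) => // i tau sT htau.
rewrite x_out // add0r big1 => [|j _]; first exact: reach_prob_ge0 pick_strategy_max htau _ _.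
by have := pU j; rewrite /exit_union (negbTE nex) => ->; rewrite mulr0.
Qed.

End Achievable.
End Game.

Theorem lemmaA1 (R : realType) (S A : finType) (Max : {set S})
  (Av : S -> {set A}) (delta : S -> A -> S -> R) (n : nat)
  (Tobj : 'I_n -> {set S})
  (HAv : forall s, exists a, a \in Av s)
  (Hdelta : forall s a, a \in Av s ->
     (forall s', 0 <= delta s a s') /\ \sum_s' delta s a s' = 1)
  (s : S) :
  s \in Max ->
  best_exit Max Av delta Tobj (achievable Max Av delta Tobj) [set s]
  = achievable Max Av delta Tobj s.
Proof.
move=> sMax; apply/seteqP; split=> v.
  exact: (@best_exit_sub_achievable _ _ _ _ _ _ Hdelta HAv n Tobj s sMax v).
exact: (@achievable_sub_best_exit _ _ _ _ _ _ Hdelta HAv n Tobj s sMax v).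
Qed.
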